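(* Let $1,2,3,4$ be four distinct vertices of $G$ such that $G[\{1,2,3,4\}]$ has edge set exactly $\{12,13,23,24,34\}$. If $\Gamma_G$ is population monotonic, then $w_{23}\ge w_{12}+w_{13}$ and $w_{23}\ge w_{24}+w_{34}$.
   Context: $G=(V,E;w)$ is a finite simple graph with edge weights $w:E\to\mathbb{R}$, $w_e>0$ for all $e\in E$; $w_{ij}$ denotes the weight of edge $ij$. The matching game on $G$ is the cooperative game $\Gamma_G=(N,\gamma)$ with player set $N=V$ and, for $S\subseteq N$, $\gamma(S)$ equal to the maximum weight of a matching in the induced subgraph $G[S]$ (so $\gamma(\emptyset)=0$). A population monotonic allocation scheme (PMAS) is a family $(\boldsymbol{x}_S)_{\emptyset\neq S\subseteq N}$ with $\boldsymbol{x}_S=(x_{S,i})_{i\in S}\in\mathbb{R}^S$ such that (efficiency) $\sum_{i\in S}x_{S,i}=\gamma(S)$ for every nonempty $S\subseteq N$, and (monotonicity) $x_{S,i}\le x_{T,i}$ whenever $\emptyset\ne S\subseteq T\subseteq N$ and $i\in S$. $\Gamma_G$ is called population monotonic if it admits a PMAS. *)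

From mathcomp Require Import all_boot all_order all_algebra.
Set Implicit Arguments. Unset Strict Implicit. Unset Printing Implicit Defensive.
Import Order.TTheory GRing.Theory Num.Theory.
Local Open Scope ring_scope.

(* A finite simple graph: vertex type T, symmetric irreflexive edge relation e.
   Edge weights: w : T -> T -> R, required symmetric and positive on edges
   (values of w on non-edges are irrelevant). *)

Definition simple_graph (T : finType) (e : rel T) : Prop :=
  (forall u, ~~ e u u) /\ (forall u v, e u v = e v u).

(* A matching in the induced subgraph G[S], represented as a set of ordered
   pairs (u,v) (each edge listed once), with both ends in S, joined by an edge,
   and distinct pairs vertex-disjoint. *)
Definition is_matching (T : finType) (e : rel T) (S : {set T})
  (M : {set T * T}) : bool :=
  [forall p in M, [&& e p.1 p.2, p.1 \in S & p.2 \in S]] &&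
  [forall p in M, forall q in M, (p != q) ==>
     [disjoint [set p.1; p.2] & [set q.1; q.2]]].

Definition matching_weight (R : numDomainType) (T : finType)
  (w : T -> T -> R) (M : {set T * T}) : R :=
  \sum_(p in M) w p.1 p.2.

(* gamma(S): maximum weight of a matching in G[S] (the empty matching has
   weight 0, so 0 is a valid neutral element for the max). *)
Definition gamma (R : realDomainType) (T : finType) (e : rel T)
  (w : T -> T -> R) (S : {set T}) : R :=
  \big[Num.max/0]_(M : {set T * T} | is_matching e S M) matching_weight w M.

(* Population monotonic allocation scheme: x S i is the payoff of i in S
   (only meaningful for i \in S, S nonempty). *)
Definition is_PMAS (R : realDomainType) (T : finType) (e : rel T)
  (w : T -> T -> R) (x : {set T} -> T -> R) : Prop :=
  (forall S : {set T}, S != set0 -> \sum_(i in S) x S i = gamma e w S) /\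
  (forall (S U : {set T}) (i : T), S != set0 -> S \subset U -> i \in S ->
     x S i <= x U i).

Definition population_monotonic (R : realDomainType) (T : finType)
  (e : rel T) (w : T -> T -> R) : Prop :=
  exists x : {set T} -> T -> R, is_PMAS e w x.

From mathcomp Require Import all_boot all_order all_algebra.
From mathcomp Require Import lra.
Set Implicit Arguments. Unset Strict Implicit. Unset Printing Implicit Defensive.
Import Order.TTheory GRing.Theory Num.Theory.
Local Open Scope ring_scope.

(* We show w12 + w13 <= w23;
   the other inequality is the same statement for the relabelling 4,3,2,1.

   Matching facts: on at most three vertices a matching has at most one edge,
   so gamma(S) is bounded by the heaviest edge of S; it is also at least the
   weight of any edge of S.  PMAS facts: payoffs are nonnegative, and the two
   ends of an edge uv of U jointly receive at least w_uv in U.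
   Key lemma (heavy_edge_share): if uv is a heaviest edge of a triangle uvt,
   then t gets nothing in {u,v,t}, hence nothing in {u,t}, so u alone
   receives w_ut in every coalition containing u and t.
   On a path a-c-d (ad not an edge) this is impossible for a:
   gamma{a,c,d} = max(w_ac, w_cd) < w_ac + w_cd (path_share_lt).
   Now split on the heaviest edge of the triangle 123: if it is 12 (resp. 13)
   the key lemma contradicts the path lemma on 1-3-4 (resp. 1-2-4); if it is
   23, vertices 2 and 3 receive w12 and w13 in {1,2,3}, whose value is w23. *)

Section SmallMatchings.
Variables (R : realFieldType) (T : finType) (e : rel T) (w : T -> T -> R).
Hypothesis e_irr : forall u, ~~ e u u.

Lemma gamma_ge0 (S : {set T}) : 0 <= gamma e w S.
Proof.
rewrite /gamma; apply: (bigmax_sup set0); last by rewrite /matching_weight big_set0.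
by apply/andP; split; apply/forall_inP => p; rewrite inE.
Qed.

Lemma gamma_ge_edge (S : {set T}) u v :
  e u v -> u \in S -> v \in S -> w u v <= gamma e w S.
Proof.
move=> euv uS vS; rewrite /gamma; apply: (bigmax_sup [set (u, v)]).
  apply/andP; split; apply/forall_inP => p; rewrite inE => /eqP -> /=.
    by rewrite euv uS vS.
  by apply/forall_inP => q; rewrite inE => /eqP ->; rewrite eqxx.
by rewrite /matching_weight big_set1.
Qed.

(* Two distinct edges of a matching cover four vertices, so a matching inside
   at most three vertices has at most one edge. *)
Lemma matching_small (S : {set T}) (M : {set T * T}) p q :
  (#|S| <= 3)%N -> is_matching e S M -> p \in M -> q \in M -> p = q.
Proof.
move=> cardS /andP[/forall_inP inS /forall_inP disj] pM qM.
apply/eqP; apply: contraT => npq.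
have /implyP/(_ npq) pq_disj := forall_inP (disj p pM) q qM.
have /and3P[ep p1S p2S] := inS p pM.
have /and3P[eq q1S q2S] := inS q qM.
have np : p.1 != p.2 by apply: contraTneq ep => ->; rewrite (negbTE (e_irr _)).
have nq : q.1 != q.2 by apply: contraTneq eq => ->; rewrite (negbTE (e_irr _)).
have sub : [set p.1; p.2] :|: [set q.1; q.2] \subset S.
  by apply/subsetP => z; rewrite !inE => /orP[]/orP[]/eqP->.
have := leq_trans (subset_leq_card sub) cardS.
by rewrite cardsU (disjoint_setI0 pq_disj) cards0 subn0 !cards2 np nq.
Qed.

Lemma gamma_small_le (S : {set T}) (c : R) :
  (#|S| <= 3)%N -> 0 <= c ->
  (forall u v, u \in S -> v \in S -> e u v -> w u v <= c) -> gamma e w S <= c.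
Proof.
move=> cardS c_ge0 bound; apply/bigmax_leP; split => // M matchM.
have [->|[p pM]] := set_0Vmem M; first by rewrite /matching_weight big_set0.
have -> : M = [set p].
  apply/setP => q; rewrite inE; apply/idP/eqP => [qM|-> //].
  exact: matching_small cardS matchM qM pM.
rewrite /matching_weight big_set1.
have /andP[/forall_inP inS _] := matchM.
by have /and3P[ep p1S p2S] := inS p pM; apply: bound.
Qed.

End SmallMatchings.

Lemma card_set3 (T : finType) (u v t : T) : (#|[set u; v; t]| <= 3)%N.
Proof. by rewrite -setUA !cardsU1 cards1; do 2 case: (_ \notin _). Qed.

Lemma mem_set3 (T : finType) (u v t : T) :
  [/\ u \in [set u; v; t], v \in [set u; v; t] & t \in [set u; v; t]].
Proof. by rewrite !inE !eqxx !orbT. Qed.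

Lemma set3_rot (T : finType) (u v t : T) : [set u; v; t] = [set t; u; v].
Proof. by apply/setP => z; rewrite !inE orbC orbA. Qed.

Lemma pair_sub (T : finType) (U : {set T}) u v :
  u \in U -> v \in U -> [set u; v] \subset U.
Proof. by move=> uU vU; apply/subsetP => z; rewrite !inE => /orP[]/eqP->. Qed.

Lemma sum_set3 (R : realFieldType) (T : finType) (F : T -> R) u v t :
  uniq [:: u; v; t] -> \sum_(i in [set u; v; t]) F i = F u + F v + F t.
Proof.
rewrite /= !inE negb_or andbT => /andP[/andP[nuv nut] nvt].
rewrite -setUA big_setU1 ?inE ?negb_or ?nuv ?nut //=.
by rewrite big_setU1 ?inE // big_set1 addrA.
Qed.

Section PMAS.
Variables (R : realFieldType) (T : finType) (e : rel T) (w : T -> T -> R).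
Hypothesis e_irr : forall u, ~~ e u u.
Hypothesis e_sym : forall u v, e u v = e v u.
Hypothesis w_sym : forall u v, w u v = w v u.
Hypothesis w_pos : forall u v, e u v -> 0 < w u v.
Variable x : {set T} -> T -> R.
Hypothesis x_pmas : is_PMAS e w x.

Lemma pmas_eff (S : {set T}) i : i \in S -> \sum_(j in S) x S j = gamma e w S.
Proof. by case: x_pmas => eff _ iS; apply: eff; apply/set0Pn; exists i. Qed.

Lemma pmas_mono (S U : {set T}) i : i \in S -> S \subset U -> x S i <= x U i.
Proof. by case: x_pmas => _ mono iS SU; apply: mono => //; apply/set0Pn; exists i. Qed.

(* Monotonicity from the singleton {i}, whose value is gamma {i} >= 0. *)
Lemma pmas_ge0 (S : {set T}) i : i \in S -> 0 <= x S i.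
Proof.
move=> iS; have sub : [set i] \subset S by rewrite sub1set.
apply: le_trans (pmas_mono (set11 i) sub).
by have := pmas_eff (set11 i); rewrite big_set1 => ->; apply: gamma_ge0.
Qed.

Lemma pmas_sum3 u v t : uniq [:: u; v; t] ->
  x [set u; v; t] u + x [set u; v; t] v + x [set u; v; t] t =
  gamma e w [set u; v; t].
Proof.
have [uS _ _] := mem_set3 u v t.
by move=> uvt; rewrite -sum_set3 // (pmas_eff uS).
Qed.

(* The ends of an edge uv share gamma {u,v} >= w_uv in {u,v}, and keep at
   least as much in every larger coalition. *)
Lemma pmas_edge (U : {set T}) u v :
  e u v -> u \in U -> v \in U -> w u v <= x U u + x U v.
Proof.
move=> euv uU vU; have sub := pair_sub uU vU.
have nuv : u != v by apply: contraTneq euv => ->; rewrite (negbTE (e_irr _)).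
have pair : x [set u; v] u + x [set u; v] v = gamma e w [set u; v].
  by rewrite -(pmas_eff (set21 u v)) big_setU1 ?big_set1 ?inE.
have := gamma_ge_edge w euv (set21 u v) (set22 u v).
have := pmas_mono (set21 u v) sub; have := pmas_mono (set22 u v) sub.
lra.
Qed.

Lemma gamma_triangle_le u v t :
  e u v -> w u t <= w u v -> w v t <= w u v -> gamma e w [set u; v; t] <= w u v.
Proof.
move=> euv hut hvt; apply: (gamma_small_le e_irr) => //; first exact: card_set3.
  exact: ltW (w_pos euv).
move=> a b; rewrite !inE => /orP[/orP[]|]/eqP-> /orP[/orP[]|]/eqP->;
  rewrite ?(negbTE (e_irr _)) // => _;
  by rewrite ?(w_sym v u) ?(w_sym t u) ?(w_sym t v).
Qed.

(* Key lemma: if uv is a heaviest edge of the triangle uvt, then t gets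
   nothing in {u,v,t}, hence nothing in {u,t}; so if ut is an edge, u alone
   gets at least w_ut in every coalition containing u and t. *)
Lemma heavy_edge_share u v t (U : {set T}) :
  uniq [:: u; v; t] -> e u v -> e u t ->
  w u t <= w u v -> w v t <= w u v -> u \in U -> t \in U ->
  w u t <= x U u.
Proof.
move=> uvt euv eut hut hvt uU tU.
have [uS vS tS] := mem_set3 u v t.
have t_nothing : x [set u; v; t] t <= 0.
  have := pmas_edge euv uS vS; have := gamma_triangle_le euv hut hvt.
  have := pmas_sum3 uvt; lra.
have := pmas_mono (set22 u t) (pair_sub uS tS).
have := pmas_edge eut (set21 u t) (set22 u t).
have := pmas_mono (set21 u t) (pair_sub uU tU).
lra.
Qed.

(* On a path a-c-d with ad not an edge, gamma {a,c,d} = max(w_ac, w_cd) is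
   less than w_ac + w_cd, while c and d jointly receive at least w_cd. *)
Lemma path_share_lt a c d :
  uniq [:: a; c; d] -> e a c -> e c d -> ~~ e a d ->
  x [set a; c; d] a < w a c.
Proof.
move=> acd eac ecd nad; have [_ cS dS] := mem_set3 a c d.
have pac := w_pos eac; have pcd := w_pos ecd.
have gammaS : gamma e w [set a; c; d] <= Num.max (w a c) (w c d).
  apply: (gamma_small_le e_irr); first exact: card_set3.
    by rewrite le_max ltW.
  move=> u v; rewrite !inE => /orP[/orP[]|]/eqP-> /orP[/orP[]|]/eqP->;
    rewrite ?(negbTE (e_irr _)) ?(e_sym d a) ?(negbTE nad) // => _;
    by rewrite ?(w_sym c a) ?(w_sym d c) le_max lexx ?orbT.
have max_lt : Num.max (w a c) (w c d) < w a c + w c d.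
  by rewrite gt_max ltrDl ltrDr pac pcd.
have := pmas_edge ecd cS dS; have := pmas_sum3 acd; lra.
Qed.

(* In a diamond, an edge ab at the apex a is never a heaviest edge of the
   triangle abc: otherwise a would get w_ac in {a,c,d}. *)
Lemma apex_edge_not_heaviest a b c d :
  uniq [:: a; b; c] -> uniq [:: a; c; d] -> e a b -> e a c -> e c d ->
  ~~ e a d -> w a c <= w a b -> w b c <= w a b -> False.
Proof.
move=> abc acd eab eac ecd nad hac hbc; have [aS cS _] := mem_set3 a c d.
have := heavy_edge_share abc eab eac hac hbc aS cS.
by rewrite leNgt path_share_lt.
Qed.

(* If bc is a heaviest edge of the triangle abc, then b and c each receive
   their edge to a in {a,b,c}, whose value is w_bc. *)
Lemma opposite_edge_heaviest a b c :
  uniq [:: a; b; c] -> e a b -> e a c -> e b c ->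
  w a b <= w b c -> w a c <= w b c -> w a b + w a c <= w b c.
Proof.
move=> abc eab eac ebc hab hac; have [aS bS cS] := mem_set3 a b c.
have bca : uniq [:: b; c; a] by move: abc; rewrite -(rot_uniq 1).
have cba : uniq [:: c; b; a] by move: abc; rewrite -rev_uniq.
have eba : e b a by rewrite e_sym.
have eca : e c a by rewrite e_sym.
have ecb : e c b by rewrite e_sym.
have hba : w b a <= w b c by rewrite w_sym.
have hca : w c a <= w b c by rewrite w_sym.
have b_share := heavy_edge_share bca ebc eba hba hca bS aS.
have gamma_abc := gamma_triangle_le ebc hba hca.
rewrite set3_rot in gamma_abc; rewrite (w_sym b c) in hba hca.
have c_share := heavy_edge_share cba ecb eca hca hba cS aS.
have := pmas_sum3 abc; have := pmas_ge0 aS.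
have := w_sym a b; have := w_sym a c; lra.
Qed.

Lemma diamond_le a b c d :
  uniq [:: a; b; c; d] -> e a b -> e a c -> e b c -> e b d -> e c d ->
  ~~ e a d -> w a b + w a c <= w b c.
Proof.
rewrite /= !inE !negb_or => /and4P[/and3P[nab nac nad] /andP[nbc nbd] ncd _].
move=> eab eac ebc ebd ecd nad'.
have uniq3 (u v t : T) : u != v -> u != t -> v != t -> uniq [:: u; v; t].
  by move=> nuv nut nvt; rewrite /= !inE !negb_or nuv nut nvt.
have abc := uniq3 _ _ _ nab nac nbc.
have acb : uniq [:: a; c; b] by apply: uniq3; rewrite // eq_sym.
have acd := uniq3 _ _ _ nac nad ncd; have abd := uniq3 _ _ _ nab nad nbd.
have [hac_ab|hab_ac] := lerP (w a c) (w a b).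
- have [hbc|hbc] := lerP (w b c) (w a b).
    by case: (apex_edge_not_heaviest abc acd eab eac ecd nad' hac_ab hbc).
  by apply: opposite_edge_heaviest; rewrite // ltW // (le_lt_trans hac_ab).
- have [hbc|hbc] := lerP (w b c) (w a c).
    have hcb : w c b <= w a c by rewrite w_sym.
    by case: (apex_edge_not_heaviest acb abd eac eab ebd nad' (ltW hab_ac) hcb).
  by apply: opposite_edge_heaviest; rewrite // ltW // (lt_trans hab_ac).
Qed.

End PMAS.

(* The second inequality is the first one for the diamond 4,3,2,1. *)
Theorem mainTheorem7 (R : realFieldType) (T : finType) (e : rel T)
  (w : T -> T -> R)
  (Hsimple : simple_graph e)
  (Hwsym : forall u v, w u v = w v u)
  (Hwpos : forall u v, e u v -> 0 < w u v)
  (v1 v2 v3 v4 : T)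
  (Hdistinct : uniq [:: v1; v2; v3; v4])
  (H12 : e v1 v2) (H13 : e v1 v3) (H23 : e v2 v3)
  (H24 : e v2 v4) (H34 : e v3 v4) (H14 : ~~ e v1 v4) :
  population_monotonic e w ->
  w v1 v2 + w v1 v3 <= w v2 v3 /\ w v2 v4 + w v3 v4 <= w v2 v3.
Proof.
case: Hsimple => e_irr e_sym [x x_pmas].
have diamond := diamond_le e_irr e_sym Hwsym Hwpos x_pmas.
split; first exact: diamond Hdistinct H12 H13 H23 H24 H34 H14.
have rev_distinct : uniq [:: v4; v3; v2; v1] by move: Hdistinct; rewrite -rev_uniq.
rewrite addrC (Hwsym v2 v4) (Hwsym v3 v4) (Hwsym v2 v3).
by apply: diamond rev_distinct _ _ _ _ _ _; rewrite // e_sym.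
Qed.
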